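(* Let $\omega=\frac12(-1+\sqrt3\,i)\in\mathbb{C}$. With relations ordered $\mathcal R_0,\dots,\mathcal R_5$ as in the context, and for a suitable ordering $E_0,\dots,E_5$ of the primitive idempotents (with $E_0=\frac1{|\Phi|}J$), the character tables (rows $E_i$, columns $\mathcal R_j$), followed by the multiplicities $m_i$, are as follows. For $\mathcal X(GU(2,2),\Phi(2,2))$: rows $(1,1,1,2,2,2)$, $(1,\omega,\bar\omega,2,2\bar\omega,2\omega)$, $(1,\bar\omega,\omega,2,2\omega,2\bar\omega)$, $(1,1,1,-1,-1,-1)$, $(1,\omega,\bar\omega,-1,-\bar\omega,-\omega)$, $(1,\bar\omega,\omega,-1,-\omega,-\bar\omega)$, with multiplicities $1,1,1,2,2,2$. For $\mathcal X(GU(3,2),\Phi(3,2))$: rows $(1,1,1,8,8,8)$, $(1,\omega,\bar\omega,-4,-4\bar\omega,-4\omega)$, $(1,\bar\omega,\omega,-4,-4\omega,-4\bar\omega)$, $(1,1,1,-1,-1,-1)$, $(1,\omega,\bar\omega,2,2\bar\omega,2\omega)$, $(1,\bar\omega,\omega,2,2\omega,2\bar\omega)$, with multiplicities $1,3,3,8,6,6$.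
   Context: Let $\Phi=\Phi(n,2)=\{x\in\mathbb{F}_4^n\setminus\{0\}:\langle x,x\rangle=0\}$ with $\langle x,y\rangle=\sum_k x_ky_k^{2}$, and let $\mathcal X(GU(n,2),\Phi(n,2))$ be the association scheme of orbitals of $GU(n,2)$ acting on $\Phi$ by $x\mapsto xU$. Fix a primitive element $\alpha$ of $\mathbb{F}_4$. For $n\in\{2,3\}$ the relations are $\mathcal R_l=\{(x,y):y=\alpha^lx\}$ for $l=0,1,2$ and $\mathcal R_l=\{(x,y):\langle x,y\rangle=\alpha^{l}\}$ for $l=3,4,5$. For a commutative association scheme with adjacency matrices $A_0,\dots,A_d$ and primitive idempotents $E_0,\dots,E_d$ of its Bose–Mesner algebra, the character table (first eigenmatrix) is $P=[p_j(i)]$ where $A_j=\sum_i p_j(i)E_i$; the multiplicity $m_i$ is the rank of $E_i$. *)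

From HB Require Import structures.
From mathcomp Require Import all_boot all_order all_algebra all_field.
Set Implicit Arguments. Unset Strict Implicit. Unset Printing Implicit Defensive.
Import Order.TTheory GRing.Theory Num.Theory.
Local Open Scope ring_scope.

(* Hermitian form <x,y> = sum_k x_k y_k^2 on F^n, F a field of order 4 *)
Definition herm (F : finFieldType) (n : nat) (x y : 'rV[F]_n) : F :=
  \sum_(k < n) x 0 k * (y 0 k) ^+ 2.

Definition isotropic (F : finFieldType) (n : nat) : pred 'rV[F]_n :=
  fun x => (x != 0) && (herm x x == 0).

Definition Phi (F : finFieldType) (n : nat) := {x : 'rV[F]_n | isotropic x}.

Definition Rel (F : finFieldType) (n : nat) (a : F) (l : 'I_6)
  (x y : Phi F n) : bool :=
  if (l < 3)%N then val y == a ^+ l *: val x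
  else herm (val x) (val y) == a ^+ l.

Definition adj (F : finFieldType) (n : nat) (a : F) (l : 'I_6)
  : 'M[algC]_#|{: Phi F n}| :=
  \matrix_(i, j) (Rel a l (enum_val i) (enum_val j))%:R.

Definition in_BM (F : finFieldType) (n : nat) (a : F) (M : 'M[algC]_#|{: Phi F n}|)
  : Prop := exists c : 'I_6 -> algC, M = \sum_(j < 6) c j *: @adj F n a j.

Definition idem N (M : 'M[algC]_N) : Prop := M *m M = M.

Definition primitive_idem (F : finFieldType) (n : nat) (a : F)
  (E : 'M[algC]_#|{: Phi F n}|) : Prop :=
  [/\ @in_BM F n a E, idem E, E != 0 &
   forall G, @in_BM F n a G -> idem G -> G *m E = G -> G = 0 \/ G = E].

Definition has_char_table (F : finFieldType) (n : nat) (a : F)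
  (P : 'I_6 -> 'I_6 -> algC) (m : 'I_6 -> nat) : Prop :=
  exists E : 'I_6 -> 'M[algC]_#|{: Phi F n}|,
    (forall i, @primitive_idem F n a (E i)) /\
    (forall i j, i != j -> E i *m E j = 0) /\
    \sum_(i < 6) E i = 1%:M /\
    E 0 = (#|{: Phi F n}|%:R)^-1 *: const_mx 1 /\
    (forall j, @adj F n a j = \sum_(i < 6) P i j *: E i) /\
    (forall i, \rank (E i) = m i).

Definition omega : algC := (-1 + sqrtC 3 * 'i) / 2.
Definition omegab : algC := omega^*.

Definition tbl (s : seq (seq algC)) (i j : 'I_6) : algC := nth 0 (nth [::] s i) j.
Definition mults (s : seq nat) (i : 'I_6) : nat := nth 0%N s i.

Definition P_GU2 : seq (seq algC) :=
  [:: [:: 1; 1; 1; 2; 2; 2];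
      [:: 1; omega; omegab; 2; 2 * omegab; 2 * omega];
      [:: 1; omegab; omega; 2; 2 * omega; 2 * omegab];
      [:: 1; 1; 1; -1; -1; -1];
      [:: 1; omega; omegab; -1; - omegab; - omega];
      [:: 1; omegab; omega; -1; - omega; - omegab]].
Definition m_GU2 : seq nat := [:: 1; 1; 1; 2; 2; 2]%N.

Definition P_GU3 : seq (seq algC) :=
  [:: [:: 1; 1; 1; 8; 8; 8];
      [:: 1; omega; omegab; -4; -4 * omegab; -4 * omega];
      [:: 1; omegab; omega; -4; -4 * omega; -4 * omegab];
      [:: 1; 1; 1; -1; -1; -1];
      [:: 1; omega; omegab; 2; 2 * omegab; 2 * omega];
      [:: 1; omegab; omega; 2; 2 * omega; 2 * omegab]].
Definition m_GU3 : seq nat := [:: 1; 3; 3; 8; 6; 6]%N.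

(* The Bose-Mesner algebra is generated by S = A_1, which is multiplication by
   alpha (so S^3 = 1 and A_2 = S^2), and T = A_3; they commute, A_4 = T S^2,
   A_5 = T S, and T^2 = c0 + T + c2 (A_4 + A_5), with (c0, c2) = (2, 0) for
   n = 2 and (8, 3) for n = 3.  The spectral projections of S for the cube
   roots of unity x split the algebra; on the range of the x-projection T
   satisfies a quadratic equation, and its two roots t, q give two primitive
   idempotents.  The eigenvalue of A_j on such an idempotent is a monomial in
   x and t, and the multiplicity is the trace of the idempotent, read off from
   tr A_j = 0 for j <> 0.  The structure constants are checked by computation
   on an explicit model of F_4. *)

From HB Require Import structures.
From mathcomp Require Import all_boot all_order all_algebra all_field.
From mathcomp Require Import ring.
Import Order.TTheory GRing.Theory Num.Theory.
Set Implicit Arguments. Unset Strict Implicit. Unset Printing Implicit Defensive.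

Local Open Scope ring_scope.

Section CubeRootsOfUnity.
Variables (R : idomainType) (x : R).
Hypotheses (x3 : x ^+ 3 = 1) (x1 : x != 1).

Lemma cube_root1_sum : 1 + x + x ^+ 2 = 0.
Proof.
have /eqP : (x - 1) * (1 + x + x ^+ 2) = 0.
  have -> : (x - 1) * (1 + x + x ^+ 2) = x ^+ 3 - 1 by ring.
  by rewrite x3 subrr.
by rewrite mulf_eq0 subr_eq0 (negbTE x1) => /eqP.
Qed.

Lemma cube_root1_sqrE : x ^+ 2 = - 1 - x.
Proof. by apply: (addrI (1 + x)); rewrite cube_root1_sum; ring. Qed.

Lemma cube_root1_sqrD : x ^+ 2 + x = - 1.
Proof. by rewrite cube_root1_sqrE subrK. Qed.

Lemma cube_root1_neq0 : x != 0.
Proof. by apply: contra_eq_neq x3 => ->; rewrite expr0n eq_sym oner_eq0. Qed.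

Lemma cube_root1_sqr : (x ^+ 2) ^+ 2 = x.
Proof. by rewrite -exprM (exprD x 3 1) x3 mul1r. Qed.

Lemma cube_root1_sqr_neq1 : x ^+ 2 != 1.
Proof. by apply: contra_neq x1 => x2; rewrite -cube_root1_sqr x2 expr1n. Qed.

Lemma cube_root1_neq_sqr : x != x ^+ 2.
Proof.
by apply: contra_neq x1 => xx2; rewrite -x3 exprSr -xx2 -expr2 -xx2.
Qed.

Lemma cube_root1_expr_eq k l : (k < 3)%N -> (l < 3)%N -> (x ^+ k == x ^+ l) = (k == l).
Proof.
have x_neq_x2 := cube_root1_neq_sqr; have x2_neq1 := cube_root1_sqr_neq1.
by case: k => [|[|[|//]]] _; case: l => [|[|[|//]]] _;
  rewrite ?expr0 ?expr1 ?eqxx // ?(negbTE x1) ?(negbTE x2_neq1) ?(negbTE x_neq_x2) //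
          eq_sym ?(negbTE x1) ?(negbTE x2_neq1) ?(negbTE x_neq_x2).
Qed.

Lemma cube_root1_three_neq0 : 3 != 0 :> R.
Proof.
have -> : 3 = (1 - x) * (1 - x ^+ 2) :> R.
  have -> : (1 - x) * (1 - x ^+ 2) = 3 - (1 + x + x ^+ 2) + (x ^+ 3 - 1) by ring.
  by rewrite cube_root1_sum x3 subrr subr0 addr0.
by rewrite mulf_neq0 // subr_eq0 eq_sym ?cube_root1_sqr_neq1.
Qed.
End CubeRootsOfUnity.

Lemma cube_root1_delta (K : fieldType) (x y : K) :
  x ^+ 3 = 1 -> y ^+ 3 = 1 -> 3 != 0 :> K ->
  3^-1 * (1 + x ^+ 2 * y + x * y ^+ 2) = (x == y)%:R.
Proof.
move=> x3 y3 three_neq0; have [<-|x_neq_y] := eqVneq x y.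
  have -> : 1 + x ^+ 2 * x + x * x ^+ 2 = 3 + 2 * (x ^+ 3 - 1) by ring.
  by rewrite x3 subrr mulr0 addr0 mulVf.
set z := x ^+ 2 * y.
have z3 : z ^+ 3 = 1 by rewrite /z exprMn -exprM mulnC exprM x3 y3 expr1n mulr1.
have z1 : z != 1.
  apply: contra_neq x_neq_y => z_eq1.
  have xz : x * z = x ^+ 3 * y by rewrite /z; ring.
  by rewrite -[y]mul1r -x3 -xz z_eq1 mulr1.
have -> : x * y ^+ 2 = z ^+ 2.
  have zz : z ^+ 2 = x ^+ 3 * (x * y ^+ 2) by rewrite /z; ring.
  by rewrite zz x3 mul1r.
by rewrite (cube_root1_sum z3 z1) mulr0.
Qed.

Lemma mxrank_idem_trace (K : fieldType) m (E : 'M[K]_m) :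
  E *m E = E -> (\rank E)%:R = \tr E.
Proof.
(* E = C B with B row-free; idempotency forces B C = 1, so tr E = tr (B C) = rank E. *)
move=> idemE; set B := row_base E; set C := E *m pinvmx B.
have CB : C *m B = E by rewrite mulmxKpV // eq_row_base.
have free_B : row_free B := row_base_free E.
have rank_C : \rank C = \rank E.
  by apply/eqP; rewrite eqn_leq rank_leq_col -{1}CB mxrankM_maxl.
clearbody C B.
have CBC : C *m (B *m C) = C *m 1%:M.
  by apply: (row_free_inj free_B); rewrite mulmx1 !mulmxA CB -mulmxA CB idemE.
have BC : B *m C = 1%:M.
  have free_Ct : row_free C^T by rewrite /row_free mxrank_tr rank_C.
  by apply/trmx_inj/(row_free_inj free_Ct); rewrite -!trmx_mul CBC.
by rewrite -[in RHS]CB mxtrace_mulC BC mxtrace1.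
Qed.

Lemma ord6P (P : 'I_6 -> Prop) :
  P 0 -> P 1 -> P 2 -> P 3 -> P 4 -> P 5 -> forall j, P j.
Proof.
move=> P0 P1 P2 P3 P4 P5 j.
suff -> : j = nth 0 [:: 0; 1; 2; 3; 4; 5] j by case: j => [[|[|[|[|[|[|//]]]]]] ?].
by apply: val_inj; case: j => [[|[|[|[|[|[|//]]]]]] ?].
Qed.

Lemma enum_ord6 : enum 'I_6 = [:: 0; 1; 2; 3; 4; 5].
Proof. by apply: (inj_map val_inj); rewrite val_enum_ord. Qed.

Lemma big_ord6 (V : nmodType) (f : 'I_6 -> V) :
  \sum_(j < 6) f j = f 0 + f 1 + f 2 + f 3 + f 4 + f 5.
Proof. by rewrite -big_enum enum_ord6 !big_cons big_nil /= addr0 !addrA. Qed.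

Lemma sum_indicator_count (R : pzSemiRingType) (T : Type) (s : seq T) (P : pred T) :
  \sum_(x <- s) (P x)%:R = (count P s)%:R :> R.
Proof. by rewrite -sumn_count sumnE big_map natr_sum. Qed.

Lemma sum_ord_sumn (G : nat -> nat) m : \sum_(l < m) G l = sumn [seq G l | l <- iota 0 m].
Proof. by rewrite sumnE big_map -(big_mkord xpredT) /index_iota subn0. Qed.

Section CubeSplitting.
Variables (K : fieldType) (N : nat) (A : 'I_6 -> 'M[K]_N) (w c0 c2 : K).
Local Notation S := (A 1).
Local Notation T := (A 3).
Hypotheses (w3 : w ^+ 3 = 1) (w1 : w != 1).
Hypotheses (A0 : A 0 = 1%:M) (SS : S *m S = A 2) (SA2 : S *m A 2 = 1%:M)
  (ST : S *m T = A 5) (TS : T *m S = A 5) (TA2 : T *m A 2 = A 4)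
  (TT : T *m T = c0 *: 1%:M + T + c2 *: (A 4 + A 5)).

Let three_neq0 : 3 != 0 :> K := cube_root1_three_neq0 w3 w1.

Lemma A2T : A 2 *m T = A 4.
Proof. by rewrite -SS -mulmxA ST -TS mulmxA ST -TS -mulmxA SS TA2. Qed.

(* For x^3 = 1, the spectral projection of S (which satisfies S^3 = 1) for the eigenvalue x. *)
Definition Sproj (x : K) : 'M[K]_N := 3^-1 *: (1%:M + x ^+ 2 *: S + x *: A 2).

Lemma Sproj_eigen x y (Y : 'M_N) : S *m Y = y *: Y ->
  Sproj x *m Y = (3^-1 * (1 + x ^+ 2 * y + x * y ^+ 2)) *: Y.
Proof.
move=> SY; have A2Y : A 2 *m Y = y ^+ 2 *: Y.
  by rewrite -SS -mulmxA SY -scalemxAr SY scalerA -expr2.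
rewrite -scalemxAl !mulmxDl mul1mx -!scalemxAl SY A2Y.
by apply/matrixP => r s; rewrite !mxE; ring.
Qed.

Lemma S_Sproj x : x ^+ 3 = 1 -> S *m Sproj x = x *: Sproj x.
Proof.
move=> x3; rewrite -scalemxAr !mulmxDr mulmx1 -!scalemxAr SS SA2.
have -> : S = x ^+ 3 *: S by rewrite x3 scale1r.
by apply/matrixP => r s; rewrite !mxE; ring.
Qed.

Lemma Sproj_S x : Sproj x *m S = S *m Sproj x.
Proof.
rewrite -scalemxAl -scalemxAr !mulmxDl !mulmxDr mulmx1 mul1mx -!scalemxAl -!scalemxAr.
by rewrite -SS mulmxA.
Qed.

Lemma Sproj_T x : Sproj x *m T = T *m Sproj x.
Proof.
rewrite -scalemxAl -scalemxAr !mulmxDl !mulmxDr mulmx1 mul1mx -!scalemxAl -!scalemxAr.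
by rewrite ST TS A2T TA2.
Qed.

Lemma sum_Sproj : Sproj 1 + Sproj w + Sproj (w ^+ 2) = 1%:M.
Proof.
rewrite /Sproj cube_root1_sqr // expr1n !scale1r.
by apply/matrixP => r s; rewrite !mxE cube_root1_sqrE //; field.
Qed.

(* On the range of Sproj x, T^2 = c0 + (1 + c2 (x^2 + x)) T; when t and q are the roots of this
   quadratic, char_idem x t q projects onto the t-eigenspace of T there. *)
Definition char_idem (x t q : K) : 'M[K]_N := (t - q)^-1 *: (Sproj x *m (T - q%:M)).

Lemma S_char_idem x t q : x ^+ 3 = 1 -> S *m char_idem x t q = x *: char_idem x t q.
Proof. by move=> x3; rewrite -scalemxAr mulmxA S_Sproj // -scalemxAl !scalerA mulrC. Qed.

Lemma T_char_idem x t q : x ^+ 3 = 1 ->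
  t + q = 1 + c2 * (x ^+ 2 + x) -> t * q = - c0 ->
  T *m char_idem x t q = t *: char_idem x t q.
Proof.
move=> x3 sum_tq prod_tq; rewrite -scalemxAr [RHS]scalerA mulrC -scalerA.
congr (_ *: _).
set U := Sproj x; have UT : U *m T = T *m U := Sproj_T x.
have US : U *m S = x *: U by rewrite Sproj_S S_Sproj.
have UA2 : U *m A 2 = x ^+ 2 *: U.
  by rewrite -SS mulmxA US -scalemxAl US scalerA -expr2.
have UA5 : U *m A 5 = x *: (U *m T) by rewrite -TS mulmxA UT -mulmxA US -scalemxAr.
have UA4 : U *m A 4 = x ^+ 2 *: (U *m T) by rewrite -TA2 mulmxA UT -mulmxA UA2 -scalemxAr.
have c0E : c0 = - (t * q) by rewrite prod_tq opprK.
have tE : t = 1 + c2 * (x ^+ 2 + x) - q by rewrite -sum_tq addrK.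
rewrite mulmxA -UT -mulmxA !mulmxBr !mul_mx_scalar TT !mulmxDr -!scalemxAr mulmx1.
rewrite mulmxDr UA4 UA5 c0E; move: (U *m T) => V.
by apply/matrixP => r s; rewrite !mxE tE; ring.
Qed.

Lemma char_idem_eigen x t q y s (Y : 'M_N) : x ^+ 3 = 1 -> y ^+ 3 = 1 ->
  S *m Y = y *: Y -> T *m Y = s *: Y ->
  char_idem x t q *m Y = ((t - q)^-1 * (s - q) * (x == y)%:R) *: Y.
Proof.
move=> x3 y3 SY TY; rewrite -scalemxAl -mulmxA mulmxBl TY mul_scalar_mx -scalerBl.
rewrite -scalemxAr (Sproj_eigen _ SY) cube_root1_delta // !scalerA.
by congr (_ *: _); ring.
Qed.

Lemma char_idem_pair x t q : t != q -> char_idem x t q + char_idem x q t = Sproj x.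
Proof.
move=> t_neq_q; rewrite /char_idem !mulmxBr !mul_mx_scalar.
move: (Sproj x *m T) (Sproj x) => V U; apply/matrixP => r s; rewrite !mxE; field.
by rewrite !subr_eq0 t_neq_q eq_sym t_neq_q.
Qed.

Lemma char_idem_span x t q : char_idem x t q =
  \sum_(j < 6) ((t - q)^-1 * 3^-1 *
                nth 0 [:: - q; - (x ^+ 2 * q); - (x * q); 1; x; x ^+ 2] j) *: A j.
Proof.
rewrite big_ord6 /char_idem /Sproj -scalemxAl !mulmxDl mul1mx.
rewrite -!scalemxAl !mulmxBr !mul_mx_scalar ST A2T A0 /=.
by apply/matrixP => r s; rewrite !mxE; ring.
Qed.

Definition adj_eigenvalue (y t : K) (j : 'I_6) : K :=
  y ^+ nth 0%N [:: 0; 1; 2; 0; 2; 1]%N j * t ^+ (3 <= j)%N.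

Lemma A_eigen j y t (Y : 'M_N) : S *m Y = y *: Y -> T *m Y = t *: Y ->
  A j *m Y = adj_eigenvalue y t j *: Y.
Proof.
move=> SY TY; have A2Y : A 2 *m Y = y ^+ 2 *: Y.
  by rewrite -SS -mulmxA SY -scalemxAr SY scalerA -expr2.
rewrite /adj_eigenvalue; move: j; apply: ord6P; rewrite /= ?expr0 ?expr1 ?mulr1 ?mul1r //.
- by rewrite A0 mul1mx scale1r.
- by rewrite -TA2 -mulmxA A2Y -scalemxAr TY scalerA mulrC.
- by rewrite -TS -mulmxA SY -scalemxAr TY scalerA mulrC.
Qed.

Variables (t0 t0' t1 t1' : K).
Hypotheses (sum_t0 : t0 + t0' = 1 + 2 * c2) (prod_t0 : t0 * t0' = - c0)
  (sum_t1 : t1 + t1' = 1 - c2) (prod_t1 : t1 * t1' = - c0)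
  (t0_neq : t0 != t0') (t1_neq : t1 != t1').

(* The idempotents i and i + 3 lie under the same projection of S and swap the roots t, q. *)
Definition idem_root (i : 'I_6) : K := w ^+ (i %% 3).
Definition idem_t (i : 'I_6) : K := nth 0 [:: t0; t1; t1; t0'; t1'; t1'] i.
Definition idem_q (i : 'I_6) : K := nth 0 [:: t0'; t1'; t1'; t0; t1; t1] i.
Definition bm_idem (i : 'I_6) : 'M[K]_N := char_idem (idem_root i) (idem_t i) (idem_q i).

Lemma idem_rootE i : idem_root i = nth 0 [:: 1; w; w ^+ 2; 1; w; w ^+ 2] i.
Proof. by move: i; apply: ord6P; rewrite /idem_root /= ?expr0 ?expr1. Qed.

Lemma idem_root3 i : idem_root i ^+ 3 = 1.
Proof. by rewrite -exprM mulnC exprM w3 expr1n. Qed.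

Lemma idem_tq i : idem_t i + idem_q i = 1 + c2 * (idem_root i ^+ 2 + idem_root i) /\
                  idem_t i * idem_q i = - c0.
Proof.
have w2w := cube_root1_sqrD w3 w1.
move: i; apply: ord6P; rewrite /idem_t /idem_q /idem_root /= ?expr0 ?expr1 ?w2w;
  rewrite ?cube_root1_sqr // ?[w + _]addrC ?w2w;
  by split; rewrite ?(addrC t0') ?(addrC t1') ?(mulrC t0') ?(mulrC t1')
  ?sum_t0 ?sum_t1 ?prod_t0 ?prod_t1; ring.
Qed.

Lemma S_bm_idem i : S *m bm_idem i = idem_root i *: bm_idem i.
Proof. exact: S_char_idem (idem_root3 i). Qed.

Lemma T_bm_idem i : T *m bm_idem i = idem_t i *: bm_idem i.
Proof. by have [sum_tq prod_tq] := idem_tq i; apply: T_char_idem (idem_root3 i) _ _. Qed.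

Lemma bm_idem_coef i j :
  (idem_t i - idem_q i)^-1 * (idem_t j - idem_q i) * (idem_root i == idem_root j)%:R
  = (i == j)%:R.
Proof.
have d0 : t0 - t0' != 0 by rewrite subr_eq0.
have d1 : t1 - t1' != 0 by rewrite subr_eq0.
have d0' : t0' - t0 != 0 by rewrite subr_eq0 eq_sym.
have d1' : t1' - t1 != 0 by rewrite subr_eq0 eq_sym.
rewrite /idem_root cube_root1_expr_eq ?ltn_pmod //.
move: i j; apply: ord6P; apply: ord6P; rewrite /idem_t /idem_q /=;
  by rewrite ?subrr ?mulr0 ?mulr1 ?mulVf.
Qed.

Lemma bm_idem_mul i j : bm_idem i *m bm_idem j = (i == j)%:R *: bm_idem j.
Proof.
rewrite (char_idem_eigen _ _ (idem_root3 i) (idem_root3 j) (S_bm_idem j) (T_bm_idem j)).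
by rewrite bm_idem_coef.
Qed.

Lemma sum_bm_idem : \sum_(i < 6) bm_idem i = 1%:M.
Proof.
rewrite big_ord6.
have -> : bm_idem 0 + bm_idem 1 + bm_idem 2 + bm_idem 3 + bm_idem 4 + bm_idem 5 =
          (bm_idem 0 + bm_idem 3) + (bm_idem 1 + bm_idem 4) + (bm_idem 2 + bm_idem 5).
  move: (bm_idem 0) (bm_idem 1) (bm_idem 2) (bm_idem 3) (bm_idem 4) (bm_idem 5).
  by move=> ? ? ? ? ? ?; apply/matrixP => r s; rewrite !mxE; ring.
rewrite /bm_idem /idem_root /idem_t /idem_q /= expr0 expr1 !char_idem_pair //.
exact: sum_Sproj.
Qed.

Lemma A_mul_bm_idem j i :
  A j *m bm_idem i = adj_eigenvalue (idem_root i) (idem_t i) j *: bm_idem i.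
Proof. exact: A_eigen (S_bm_idem i) (T_bm_idem i). Qed.

Lemma A_bm_decomp j :
  A j = \sum_(i < 6) adj_eigenvalue (idem_root i) (idem_t i) j *: bm_idem i.
Proof.
rewrite -[A j]mulmx1 -sum_bm_idem mulmx_sumr.
by apply: eq_bigr => i _; apply: A_mul_bm_idem.
Qed.

Lemma mxtrace_bm_idem i : (forall j : 'I_6, j != 0 -> \tr (A j) = 0) ->
  \tr (bm_idem i) = - ((idem_t i - idem_q i)^-1 * 3^-1 * idem_q i * N%:R).
Proof.
move=> trA; rewrite /bm_idem char_idem_span big_ord6 !mxtraceD !mxtraceZ A0 mxtrace1.
by rewrite !trA //=; ring.
Qed.

Lemma bm_idem0 : t0' = -1 -> bm_idem 0 = ((t0 + 1) * 3)^-1 *: \sum_(j < 6) A j.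
Proof.
move=> t0'E; rewrite /bm_idem char_idem_span !big_ord6 /idem_root /idem_t /idem_q /=.
rewrite mod0n expr0 t0'E; apply/matrixP => r s; rewrite !mxE; field.
by rewrite three_neq0 addr_eq0 -t0'E t0_neq.
Qed.

Lemma bm_idem_primitive i (G : 'M_N) (c : 'I_6 -> K) : bm_idem i != 0 ->
  G = \sum_(j < 6) c j *: A j -> G *m G = G -> G *m bm_idem i = G ->
  G = 0 \/ G = bm_idem i.
Proof.
move=> Ei_neq0 GE idemG GEi.
set g := \sum_(j < 6) c j * adj_eigenvalue (idem_root i) (idem_t i) j.
have GgE : G = g *: bm_idem i.
  rewrite -GEi GE mulmx_suml scaler_suml; apply: eq_bigr => j _.
  by rewrite -scalemxAl A_mul_bm_idem scalerA.
have : g *: bm_idem i *m (g *: bm_idem i) = g *: bm_idem i by rewrite -GgE.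
rewrite -scalemxAl -scalemxAr bm_idem_mul eqxx scale1r scalerA => /eqP.
rewrite -subr_eq0 -scalerBl scaler_eq0 (negbTE Ei_neq0) orbF.
have -> : g * g - g = g * (g - 1) by ring.
rewrite mulf_eq0 subr_eq0 => /orP[] /eqP g_val; rewrite GgE g_val.
  by left; rewrite scale0r.
by right; rewrite scale1r.
Qed.

Lemma cube_splitting_char_table (P : 'I_6 -> 'I_6 -> K) (m : 'I_6 -> nat) :
  t0' = -1 -> \sum_(j < 6) A j = const_mx 1 -> (forall j : 'I_6, j != 0 -> \tr (A j) = 0) ->
  N%:R = 3 * (t0 + 1) ->
  (forall i, (m i)%:R = - ((idem_t i - idem_q i)^-1 * 3^-1 * idem_q i * N%:R)) ->
  (forall i, (m i)%:R != 0 :> K) ->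
  (forall i j, P i j = adj_eigenvalue (idem_root i) (idem_t i) j) ->
  exists E : 'I_6 -> 'M[K]_N,
    (forall i, [/\ exists c : 'I_6 -> K, E i = \sum_(j < 6) c j *: A j,
                   E i *m E i = E i, E i != 0 &
                   forall G, (exists c : 'I_6 -> K, G = \sum_(j < 6) c j *: A j) ->
                     G *m G = G -> G *m E i = G -> G = 0 \/ G = E i]) /\
    (forall i j, i != j -> E i *m E j = 0) /\
    \sum_(i < 6) E i = 1%:M /\
    E 0 = (N%:R)^-1 *: const_mx 1 /\
    (forall j, A j = \sum_(i < 6) P i j *: E i) /\
    (forall i, (\rank (E i))%:R = (m i)%:R :> K).
Proof.
move=> t0'E sumA trA cardN mE m_neq0 PE.
have idemE i : bm_idem i *m bm_idem i = bm_idem i by rewrite bm_idem_mul eqxx scale1r.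
have rankE i : (\rank (bm_idem i))%:R = (m i)%:R :> K.
  by rewrite mxrank_idem_trace // mxtrace_bm_idem // mE.
have E_neq0 i : bm_idem i != 0.
  by apply: contra_neq (m_neq0 i) => Ei0; rewrite -rankE Ei0 mxrank0.
exists bm_idem; split; [|split; [|split; [|split; [|split]]]] => //.
- move=> i; split=> //; first by eexists; apply: char_idem_span.
  by move=> G [c GE]; apply: bm_idem_primitive GE.
- by move=> i j /negbTE i_neq_j; rewrite bm_idem_mul i_neq_j scale0r.
- exact: sum_bm_idem.
- by rewrite bm_idem0 // sumA cardN mulrC.
- by move=> j; rewrite A_bm_decomp; apply: eq_bigr => i _; rewrite PE.
Qed.

End CubeSplitting.

Local Open Scope nat_scope.

(* Codes 0, 1, 2, 3 stand for 0, 1, a, a^2 = 1 + a (codes above 3 are read as 3): addition is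
   xor of the coordinates in the basis 1, a, and a nonzero code k stands for a^(k-1). *)
Definition f4_norm (u : nat) : nat := minn u 3.

Definition f4_add (u v : nat) : nat := Nat.lxor (f4_norm u) (f4_norm v).

Definition f4_mul (u v : nat) : nat :=
  if (f4_norm u == 0) || (f4_norm v == 0) then 0
  else (((f4_norm u).-1 + (f4_norm v).-1) %% 3).+1.

Definition f4_pow (l : nat) : nat := (l %% 3).+1.

Definition f4_herm (n : nat) (c d : seq nat) : nat :=
  foldr f4_add 0 [seq f4_mul (nth 0 c k) (f4_mul (nth 0 d k) (nth 0 d k)) | k <- iota 0 n].

Definition f4_isotropic (n : nat) (c : seq nat) : bool :=
  (c != nseq n 0) && (f4_herm n c c == 0).

Definition f4_rel (n l : nat) (c d : seq nat) : bool :=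
  if l < 3 then d == map (f4_mul (f4_pow l)) c else f4_herm n c d == f4_pow l.

Fixpoint f4_words (n : nat) : seq (seq nat) :=
  if n is n'.+1 then [seq u :: c | u <- iota 0 4, c <- f4_words n'] else [:: [::]].

Definition f4_Phi (n : nat) : seq (seq nat) := filter (f4_isotropic n) (f4_words n).

Definition f4_delta (l : nat) : seq nat := [seq nat_of_bool (i == l) | i <- iota 0 6].

Definition f4_rel_partition (n : nat) : bool :=
  all (fun c => all (fun d =>
    count (fun l => f4_rel n l c d) (iota 0 6) == 1) (f4_Phi n)) (f4_Phi n).

Definition f4_rel_irreflexive (n : nat) : bool :=
  all (fun l => all (fun c => ~~ f4_rel n l c c) (f4_Phi n)) (iota 1 5).

Definition f4_intersection_numbers (n j k : nat) (p : seq nat) : bool :=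
  all (fun c => all (fun d =>
    count (fun e => f4_rel n j c e && f4_rel n k e d) (f4_Phi n)
      == sumn [seq nth 0 p l * f4_rel n l c d | l <- iota 0 6]) (f4_Phi n)) (f4_Phi n).

Local Open Scope ring_scope.

Section F4.
Variables (F : finFieldType) (a : F).
Hypotheses (card_F : #|F| = 4%N) (a3 : a ^+ 3 = 1) (a1 : a != 1).

Lemma F4_addxx (x : F) : x + x = 0.
Proof.
have /pcharf0 two0 : (2%N \in [pchar F]) by apply: (card_finPcharP (n := 2)).
by rewrite -mulr2n -mulr_natr two0 mulr0.
Qed.

Lemma F4_add1a : 1 + a = a ^+ 2.
Proof. by rewrite -[LHS]addr0 -(cube_root1_sum a3 a1) addrA F4_addxx add0r. Qed.

Lemma F4_add1a2 : 1 + a ^+ 2 = a.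
Proof. by rewrite -F4_add1a addrA F4_addxx add0r. Qed.

Lemma F4_addaa2 : a + a ^+ 2 = 1.
Proof. by rewrite -F4_add1a addrCA F4_addxx addr0. Qed.

Definition F4_elts : seq F := [:: 0; 1; a; a ^+ 2].

Lemma F4_elts_uniq : uniq F4_elts.
Proof.
have a0 := cube_root1_neq0 a3.
rewrite /= !inE !negb_or eq_sym oner_eq0 eq_sym a0 eq_sym expf_neq0 //=.
by rewrite eq_sym a1 eq_sym cube_root1_sqr_neq1 // cube_root1_neq_sqr.
Qed.

Lemma mem_F4_elts (x : F) : x \in F4_elts.
Proof.
apply/negPn/negP => notx.
have uniq_x : uniq (x :: F4_elts) by rewrite cons_uniq notx F4_elts_uniq.
by have := max_card (mem (x :: F4_elts)); rewrite card_F (card_uniqP uniq_x).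
Qed.

Definition f4_val (u : nat) : F := nth (a ^+ 2) F4_elts u.
Definition f4_code (x : F) : nat := index x F4_elts.

Lemma f4_codeK : cancel f4_code f4_val.
Proof. by move=> x; rewrite /f4_val nth_index ?mem_F4_elts. Qed.

Lemma f4_code_lt4 x : (f4_code x < 4)%N.
Proof. by rewrite /f4_code index_mem mem_F4_elts. Qed.

Lemma f4_valK u : (u < 4)%N -> f4_code (f4_val u) = u.
Proof. by move=> u4; rewrite /f4_code /f4_val index_uniq ?F4_elts_uniq. Qed.

Lemma f4_val_norm u : f4_val (f4_norm u) = f4_val u.
Proof. by case: u => [|[|[|[|u]]]]; rewrite /f4_val /f4_norm //= nth_default. Qed.

Lemma f4_norm_lt4 u : (f4_norm u < 4)%N.
Proof. by rewrite /f4_norm ltnS geq_minr. Qed.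

Lemma f4_valD u v : f4_val (f4_add u v) = f4_val u + f4_val v.
Proof.
rewrite /f4_add -(f4_val_norm u) -(f4_val_norm v).
case: (f4_norm u) (f4_norm_lt4 u) => [|[|[|[|//]]]] _;
case: (f4_norm v) (f4_norm_lt4 v) => [|[|[|[|//]]]] _;
  rewrite /f4_val /= ?add0r ?addr0 ?F4_addxx ?F4_add1a ?F4_add1a2 ?F4_addaa2 //;
  by rewrite addrC ?F4_add1a ?F4_add1a2 ?F4_addaa2.
Qed.

Lemma f4_valM u v : f4_val (f4_mul u v) = f4_val u * f4_val v.
Proof.
rewrite /f4_mul -(f4_val_norm u) -(f4_val_norm v).
case: (f4_norm u) (f4_norm_lt4 u) => [|[|[|[|//]]]] _;
case: (f4_norm v) (f4_norm_lt4 v) => [|[|[|[|//]]]] _;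
  rewrite /f4_val /= ?mul0r ?mulr0 ?mul1r ?mulr1 //.
- by rewrite -exprSr a3.
- by rewrite -expr2 cube_root1_sqr.
Qed.

Lemma f4_val_pow l : f4_val (f4_pow l) = a ^+ l.
Proof.
rewrite {2}(divn_eq l 3) exprD mulnC exprM a3 expr1n mul1r /f4_pow.
by case: (l %% 3)%N (ltn_pmod l (isT : 0 < 3)%N) => [|[|[|]]].
Qed.

Lemma f4_val_lt4_inj : {in [pred u | u < 4]%N &, injective f4_val}.
Proof. exact: can_in_inj f4_valK. Qed.

Lemma f4_add_lt4 u v : (f4_add u v < 4)%N.
Proof.
rewrite /f4_add.
by case: (f4_norm u) (f4_norm_lt4 u) => [|[|[|[|//]]]] _;
   case: (f4_norm v) (f4_norm_lt4 v) => [|[|[|[|//]]]].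
Qed.

Lemma f4_herm_lt4 n c d : (f4_herm n c d < 4)%N.
Proof. by rewrite /f4_herm; case: (iota 0 n) => //= k s; apply: f4_add_lt4. Qed.

Lemma f4_pow_lt4 l : (f4_pow l < 4)%N.
Proof. by rewrite ltnS ltn_pmod. Qed.

Lemma f4_mul_lt4 u v : (f4_mul u v < 4)%N.
Proof. by rewrite /f4_mul; case: ifP => // _; rewrite ltnS ltn_pmod. Qed.

Section Vectors.
Variable n : nat.

Definition vec_of_code (c : seq nat) : 'rV[F]_n := \row_(k < n) f4_val (nth 0 c k).
Definition code_of_vec (x : 'rV[F]_n) : seq nat := [seq f4_code (x 0 k) | k <- enum 'I_n].
Definition code_valid (c : seq nat) : bool := (size c == n) && all (fun u => u < 4)%N c.

Lemma code_of_vecK : cancel code_of_vec vec_of_code.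
Proof.
move=> x; apply/rowP => k.
by rewrite mxE (nth_map k) ?size_enum_ord // nth_ord_enum f4_codeK.
Qed.

Lemma code_of_vec_valid x : code_valid (code_of_vec x).
Proof.
rewrite /code_valid size_map size_enum_ord eqxx /=.
by apply/allP => _ /mapP[k _ ->]; apply: f4_code_lt4.
Qed.

Lemma vec_of_codeK c : code_valid c -> code_of_vec (vec_of_code c) = c.
Proof.
case/andP => /eqP size_c /allP c_lt4.
apply: (@eq_from_nth _ 0) => [|k]; rewrite size_map size_enum_ord ?size_c // => k_lt_n.
rewrite (nth_map (Ordinal k_lt_n)) ?size_enum_ord // mxE (nth_ord_enum _ (Ordinal k_lt_n)).
by rewrite f4_valK // c_lt4 // mem_nth ?size_c.
Qed.

Lemma vec_of_code_inj : {in code_valid &, injective vec_of_code}.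
Proof. exact: can_in_inj vec_of_codeK. Qed.

Lemma f4_val_foldr_add s : f4_val (foldr f4_add 0 s) = \sum_(u <- s) f4_val u.
Proof. by elim: s => [|u s IHs]; rewrite ?big_nil ?big_cons //= f4_valD IHs. Qed.

Lemma herm_vec_of_code c d :
  herm (vec_of_code c) (vec_of_code d) = f4_val (f4_herm n c d).
Proof.
rewrite /f4_herm f4_val_foldr_add big_map -val_enum_ord big_map big_enum /=.
by apply: eq_bigr => k _; rewrite !mxE !f4_valM expr2.
Qed.

Lemma vec_of_code_scale u c :
  vec_of_code (map (f4_mul u) c) = f4_val u *: vec_of_code c.
Proof.
apply/rowP => k; rewrite !mxE -f4_valM.
have [k_lt|k_ge] := ltnP k (size c); first by rewrite (nth_map 0).
by rewrite !nth_default ?size_map // /f4_mul orbT.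
Qed.

Lemma code_valid_scale u c : code_valid c -> code_valid (map (f4_mul u) c).
Proof.
case/andP => size_c _; rewrite /code_valid size_map size_c /=.
by apply/allP => _ /mapP[v _ ->]; apply: f4_mul_lt4.
Qed.

End Vectors.

Lemma mem_f4_words n c : (c \in f4_words n) = code_valid n c.
Proof.
have wordsS m : f4_words m.+1 = [seq u :: c | u <- iota 0 4, c <- f4_words m] by [].
elim: n c => [|m IHm] [|u c] //; rewrite wordsS.
  by apply/negbTE/negP => /allpairsP[[x y] [_ _]].
apply/allpairsP/idP => [[[v d] [v4 d_m [-> ->]]]|].
  move: v4 d_m; rewrite mem_iota IHm => /= v4 /andP[size_d d4].
  by rewrite /code_valid /= eqSS size_d v4.
case/andP=> size_c /andP[u4 c4]; exists (u, c); split; rewrite ?mem_iota //=.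
by rewrite IHm /code_valid -eqSS size_c.
Qed.

Lemma code_valid_nseq0 n : code_valid n (nseq n 0%N).
Proof. by rewrite /code_valid size_nseq eqxx all_nseq orbT. Qed.

Lemma vec_of_code_nseq0 n : vec_of_code n (nseq n 0%N) = 0.
Proof. by apply/rowP => k; rewrite !mxE nth_nseq if_same. Qed.

Lemma isotropic_vec_of_code n c :
  code_valid n c -> isotropic (vec_of_code n c) = f4_isotropic n c.
Proof.
move=> c_ok; rewrite /isotropic /f4_isotropic herm_vec_of_code -(vec_of_code_nseq0 n).
rewrite (inj_in_eq (@vec_of_code_inj n) c_ok (code_valid_nseq0 n)).
by rewrite -[0 in X in _ && X]/(f4_val 0) (inj_in_eq f4_val_lt4_inj) ?inE ?f4_herm_lt4.
Qed.

Lemma mem_f4_Phi n c : (c \in f4_Phi n) = f4_isotropic n c && code_valid n c.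
Proof. by rewrite mem_filter mem_f4_words. Qed.

Definition code_of_Phi n (x : Phi F n) : seq nat := code_of_vec (val x).

Lemma code_of_Phi_inj n : injective (@code_of_Phi n).
Proof. by move=> x y /(can_inj (@code_of_vecK n)) /val_inj. Qed.

Lemma code_of_Phi_mem n (x : Phi F n) : code_of_Phi x \in f4_Phi n.
Proof.
rewrite mem_f4_Phi code_of_vec_valid andbT -isotropic_vec_of_code ?code_of_vec_valid //.
by rewrite code_of_vecK; apply: valP.
Qed.

Lemma perm_code_of_Phi n : uniq (f4_Phi n) ->
  perm_eq [seq code_of_Phi x | x <- enum {: Phi F n}] (f4_Phi n).
Proof.
move=> uniq_Phi; apply: uniq_perm => //.
  by rewrite map_inj_uniq ?enum_uniq //; apply: code_of_Phi_inj.
move=> c; apply/mapP/idP => [[x _ ->]|c_Phi]; first exact: code_of_Phi_mem.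
move: (c_Phi); rewrite mem_f4_Phi => /andP[c_iso c_ok].
have x_iso : isotropic (vec_of_code n c) by rewrite isotropic_vec_of_code.
by exists (Sub _ x_iso); rewrite ?mem_enum // /code_of_Phi /= vec_of_codeK.
Qed.

Lemma card_Phi n : uniq (f4_Phi n) -> #|{: Phi F n}| = size (f4_Phi n).
Proof.
by move=> uniq_Phi; rewrite -(perm_size (perm_code_of_Phi uniq_Phi)) size_map cardE.
Qed.

Lemma sum_Phi n (g : seq nat -> algC) : uniq (f4_Phi n) ->
  \sum_(i < #|{: Phi F n}|) g (code_of_Phi (enum_val i)) = \sum_(c <- f4_Phi n) g c.
Proof.
move=> uniq_Phi; rewrite -(big_enum_val (fun x => g (code_of_Phi x))) /= -big_enum.
by rewrite -(big_map (@code_of_Phi n) xpredT g) (perm_big _ (perm_code_of_Phi uniq_Phi)).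
Qed.

Lemma Rel_code n l (x y : Phi F n) :
  Rel a l x y = f4_rel n l (code_of_Phi x) (code_of_Phi y).
Proof.
rewrite /Rel /f4_rel -[val x]code_of_vecK -[val y]code_of_vecK.
have [x_ok y_ok] := (code_of_vec_valid (val x), code_of_vec_valid (val y)).
case: ifP => _; first rewrite -f4_val_pow -vec_of_code_scale.
  by rewrite (inj_in_eq (@vec_of_code_inj n) y_ok (code_valid_scale _ x_ok)).
by rewrite herm_vec_of_code -f4_val_pow (inj_in_eq f4_val_lt4_inj) ?inE ?f4_herm_lt4 ?f4_pow_lt4.
Qed.

Lemma adjE n l i j : adj n a l i j =
  (f4_rel n l (code_of_Phi (enum_val i)) (code_of_Phi (enum_val j)))%:R.
Proof. by rewrite mxE Rel_code. Qed.

Lemma adj_mul n (j k : 'I_6) (p : seq nat) :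
  uniq (f4_Phi n) -> f4_intersection_numbers n j k p ->
  adj n a j *m adj n a k = \sum_(l < 6) (nth 0%N p l)%:R *: adj n a l.
Proof.
move=> uniq_Phi /allP p_ok; apply/matrixP => r s; rewrite !mxE summxE.
set c := code_of_Phi (enum_val r); set d := code_of_Phi (enum_val s).
under eq_bigr do rewrite !adjE -natrM mulnb.
rewrite (sum_Phi (fun e => (f4_rel n j c e && f4_rel n k e d)%:R)) //.
rewrite sum_indicator_count.
under [RHS]eq_bigr do rewrite mxE adjE -natrM.
rewrite -natr_sum (sum_ord_sumn (fun l => nth 0 p l * f4_rel n l c d)%N).
by rewrite (eqP (allP (p_ok c (code_of_Phi_mem _)) d (code_of_Phi_mem _))).
Qed.

Lemma adj_mul_delta n (j k l : 'I_6) :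
  uniq (f4_Phi n) -> f4_intersection_numbers n j k (f4_delta l) ->
  adj n a j *m adj n a k = adj n a l.
Proof.
move=> uniq_Phi /(adj_mul uniq_Phi) ->; rewrite (bigD1 l) //= big1 ?addr0 => [|i i_neq_l].
  by rewrite /f4_delta (nth_map 0%N) ?size_iota // nth_iota // eqxx scale1r.
by rewrite /f4_delta (nth_map 0%N) ?size_iota // nth_iota // add0n (inj_eq val_inj) (negbTE i_neq_l) scale0r.
Qed.

Lemma sum_adj n : f4_rel_partition n -> \sum_(l < 6) adj n a l = const_mx 1.
Proof.
move=> /allP part; apply/matrixP => r s; rewrite summxE mxE.
under eq_bigr do rewrite adjE.
set c := code_of_Phi _; set d := code_of_Phi _.
rewrite -natr_sum (sum_ord_sumn (fun l => nat_of_bool (f4_rel n l c d))) sumn_count.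
by rewrite (eqP (allP (part _ (code_of_Phi_mem _)) _ (code_of_Phi_mem _))).
Qed.

Lemma mxtrace_adj n (l : 'I_6) : f4_rel_irreflexive n -> l != 0 -> \tr (adj n a l) = 0.
Proof.
move=> /allP irr l_neq0; apply: big1 => i _; rewrite adjE.
have l_in : (l : nat) \in iota 1 5 by rewrite mem_iota; case: l l_neq0 => [[|l] ?].
by rewrite (negbTE (allP (irr _ l_in) _ (code_of_Phi_mem _))).
Qed.

End F4.

Lemma adj0 (F : finFieldType) (a : F) n : adj n a 0 = 1%:M.
Proof.
apply/matrixP => i j; rewrite !mxE /Rel /= scale1r.
by rewrite (inj_eq val_inj) (inj_eq enum_val_inj) eq_sym.
Qed.

Lemma omega_sqr : omega ^+ 2 = (-1 - sqrtC 3 * 'i) / 2.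
Proof.
have r2 : sqrtC 3 ^+ 2 = 3 :> algC by rewrite sqrtCK.
rewrite /omega; move: (sqrtC 3) r2 => r r2.
have -> : ((-1 + r * 'i) / 2) ^+ 2 = (1 - 2 * r * 'i + r ^+ 2 * 'i ^+ 2) / 4 by field.
by rewrite r2 sqrCi; field.
Qed.

Lemma omega3 : omega ^+ 3 = 1.
Proof.
have r2 : sqrtC 3 ^+ 2 = 3 :> algC by rewrite sqrtCK.
rewrite exprS omega_sqr /omega; move: (sqrtC 3) r2 => r r2.
have -> : (-1 + r * 'i) / 2 * ((-1 - r * 'i) / 2) = (1 - r ^+ 2 * 'i ^+ 2) / 4 by field.
by rewrite r2 sqrCi; field.
Qed.

Lemma omega_neq1 : omega != 1.
Proof.
apply/eqP => omega1.
have : 1 + omega + omega ^+ 2 = 0 by rewrite omega_sqr /omega; field.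
by rewrite omega1 expr1n => /eqP; rewrite (_ : 1 + 1 + 1 = 3%:R) ?pnatr_eq0 //; ring.
Qed.

Lemma omegabE : omegab = omega ^+ 2.
Proof.
have omegaE : omega = - 2^-1 + 'i * (sqrtC 3 / 2) by rewrite /omega; field.
rewrite /omegab omegaE conjC_rect ?rpredN ?ger0_real ?invr_ge0 ?divr_ge0 ?sqrtC_ge0 ?ler0n //.
by rewrite -omegaE omega_sqr; field.
Qed.

Section GUScheme.
Variables (F : finFieldType) (a : F).
Hypotheses (card_F : #|F| = 4%N) (a3 : a ^+ 3 = 1) (a1 : a != 1).

Lemma has_char_table_of_f4_checks n (c0 c2 : nat) (t1 t1' : algC) P m :
  uniq (f4_Phi n) -> size (f4_Phi n) = (3 * c0.+1)%N -> c0 = (2 * c2 + 2)%N ->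
  f4_rel_partition n -> f4_rel_irreflexive n ->
  f4_intersection_numbers n 1 1 (f4_delta 2) -> f4_intersection_numbers n 1 2 (f4_delta 0) ->
  f4_intersection_numbers n 1 3 (f4_delta 5) -> f4_intersection_numbers n 3 1 (f4_delta 5) ->
  f4_intersection_numbers n 3 2 (f4_delta 4) ->
  f4_intersection_numbers n 3 3 [:: c0; 0; 0; 1; c2; c2]%N ->
  t1 + t1' = 1 - c2%:R -> t1 * t1' = - c0%:R -> t1 != t1' ->
  (forall i j, P i j = adj_eigenvalue (idem_root omega i) (idem_t c0%:R (-1) t1 t1' i) j) ->
  (forall i, (m i)%:R = - ((idem_t c0%:R (-1) t1 t1' i - idem_q c0%:R (-1) t1 t1' i)^-1
                           * 3^-1 * idem_q c0%:R (-1) t1 t1' i * (3 * c0.+1)%:R)) ->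
  (forall i, 0 < m i)%N ->
  has_char_table n a P m.
Proof.
move=> uniq_Phi size_Phi c0E part irr int11 int12 int13 int31 int32 int33.
move=> sum_t1 prod_t1 t1_neq PE mE m_gt0.
have mul_delta j k l := @adj_mul_delta _ _ card_F a3 a1 n j k l uniq_Phi.
have SS := mul_delta 1 1 2 int11; have ST := mul_delta 1 3 5 int13.
have TS := mul_delta 3 1 5 int31; have TA2 := mul_delta 3 2 4 int32.
have SA2 : adj n a 1 *m adj n a 2 = 1%:M by rewrite (mul_delta 1 2 0 int12) adj0.
have TT : adj n a 3 *m adj n a 3 =
          c0%:R *: 1%:M + adj n a 3 + c2%:R *: (adj n a 4 + adj n a 5).
  rewrite (@adj_mul _ _ card_F a3 a1 n 3 3 _ uniq_Phi int33) big_ord6 adj0 /=.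
  by apply/matrixP => r s; rewrite !mxE; ring.
have cardPhi : #|{: Phi F n}| = (3 * c0.+1)%N.
  by rewrite (card_Phi card_F a3 a1 uniq_Phi) size_Phi.
have cardN : #|{: Phi F n}|%:R = 3 * (c0%:R + 1) :> algC.
  by rewrite cardPhi natrM -[c0.+1]addn1 natrD.
rewrite -cardPhi in mE.
have m_neq0 i : (m i)%:R != 0 :> algC by rewrite pnatr_eq0 -lt0n m_gt0.
(* A_3 acts on E_0 by its valency c0 and on E_3 by -1. *)
have sum_t0 : c0%:R + -1 = 1 + 2 * c2%:R :> algC by rewrite c0E natrD natrM; ring.
have prod_t0 : c0%:R * -1 = - c0%:R :> algC by rewrite mulrN1.
have t0_neq : c0%:R != -1 :> algC.
  by rewrite -subr_eq0 opprK -(natrD _ c0 1) pnatr_eq0 addn1.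
have [E [primE [orthE [sumE [E0 [AE rankE]]]]]] :=
  cube_splitting_char_table omega3 omega_neq1 (adj0 a n) SS SA2 ST TS TA2 TT
    sum_t0 prod_t0 sum_t1 prod_t1 t0_neq t1_neq erefl (sum_adj card_F a3 a1 part)
    (fun j => mxtrace_adj card_F a3 a1 irr) cardN mE m_neq0 PE.
exists E; do 5!split => //.
by move=> i; apply/eqP; rewrite -(eqr_nat algC) rankE.
Qed.

Lemma has_char_table_GU2 : has_char_table 2 a (tbl P_GU2) (mults m_GU2).
Proof.
apply: (@has_char_table_of_f4_checks 2 2 0 2 (-1)).
1-11: by vm_compute.
- by rewrite subr0; ring.
- by ring.
- by rewrite -subr_eq0 opprK (_ : 2 + 1 = 3%:R) ?pnatr_eq0 //; ring.
- apply: ord6P; apply: ord6P;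
    rewrite /tbl /adj_eigenvalue idem_rootE /idem_t /= ?omegabE ?(cube_root1_sqr omega3);
    ring.
- by elim/ord6P; rewrite /mults /idem_t /idem_q /=; field.
- by elim/ord6P.
Qed.

Lemma has_char_table_GU3 : has_char_table 3 a (tbl P_GU3) (mults m_GU3).
Proof.
apply: (@has_char_table_of_f4_checks 3 8 3 (-4) 2).
1-11: by vm_compute.
- by ring.
- by ring.
- by rewrite -subr_eq0 -opprD (_ : 4 + 2 = 6%:R) ?oppr_eq0 ?pnatr_eq0 //; ring.
- apply: ord6P; apply: ord6P;
    rewrite /tbl /adj_eigenvalue idem_rootE /idem_t /= ?omegabE ?(cube_root1_sqr omega3);
    ring.
- by elim/ord6P; rewrite /mults /idem_t /idem_q /=; field.
- by elim/ord6P.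
Qed.

End GUScheme.

Theorem mainTheorem16 (F : finFieldType) (a : F) :
  #|F| = 4%N -> a ^+ 3 = 1 -> a != 1 ->
  @has_char_table F 2 a (tbl P_GU2) (mults m_GU2) /\
  @has_char_table F 3 a (tbl P_GU3) (mults m_GU3).
Proof. by move=> card_F a3 a1; split; [apply: has_char_table_GU2 | apply: has_char_table_GU3]. Qed.
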